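(* If $G \le \mathrm{Sym}(\mathbb{N})$ is a maximal cofinitary group, then the natural action of $G$ on $\mathbb{N}$ (given by $g\cdot n = g(n)$) has only finitely many orbits.
   Context: $\mathrm{Sym}(\mathbb{N})$ is the group of bijections $\mathbb{N}\to\mathbb{N}$ under composition. A permutation is cofinitary if it is the identity or has only finitely many fixed points. A subgroup $G\le\mathrm{Sym}(\mathbb{N})$ is a cofinitary group if all its elements are cofinitary; it is a maximal cofinitary group if it is cofinitary and not properly contained in another cofinitary subgroup of $\mathrm{Sym}(\mathbb{N})$. *)

(* Subsets of Sym(N) are predicates on functions nat -> nat;
   equality of permutations is (via functional extensionality) pointwise. *)
From Stdlib Require Import List.

Definition is_bij (f : nat -> nat) : Prop :=
  exists g : nat -> nat, (forall n, g (f n) = n) /\ (forall n, f (g n) = n).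

Definition is_subgroup_Sym (G : (nat -> nat) -> Prop) : Prop :=
  (forall f, G f -> is_bij f) /\
  G (fun n => n) /\
  (forall f g, G f -> G g -> G (fun n => f (g n))) /\
  (forall f, G f -> exists g, G g /\ (forall n, g (f n) = n) /\ (forall n, f (g n) = n)).

Definition cofinitary (f : nat -> nat) : Prop :=
  (forall n, f n = n) \/ (exists N, forall n, f n = n -> n < N).

Definition cofinitary_group (G : (nat -> nat) -> Prop) : Prop :=
  is_subgroup_Sym G /\ (forall f, G f -> cofinitary f).

Definition maximal_cofinitary_group (G : (nat -> nat) -> Prop) : Prop :=
  cofinitary_group G /\
  forall H : (nat -> nat) -> Prop,
    cofinitary_group H -> (forall f, G f -> H f) -> (forall f, H f -> G f).

Definition same_orbit (G : (nat -> nat) -> Prop) (n m : nat) : Prop :=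
  exists g, G g /\ g n = m.

Definition finitely_many_orbits (G : (nat -> nat) -> Prop) : Prop :=
  exists reps : list nat, forall n, exists r, In r reps /\ same_orbit G r n.

(* Suppose G is a cofinitary group with infinitely many orbits.  We build a
   permutation h outside G such that the group generated by G and h is still
   cofinitary, so G is not maximal.

   Group the infinitely many orbits into infinitely many
   G-invariant "ranks", each rank containing infinitely many points, and
   relabel N as N x N with the rank as first coordinate.  Then h is an
   involution that always changes the rank and, within each rank, decreases
   it at exactly one point (a "shifting involution").

   Every element of <G, h> is g0 o h o g1 o h o ... o h o gn
   with all gi in G; up to conjugation and cancellation (h is an involution)
   we may assume n >= 1 and every gi is non-trivial.  Along the cyclic walk
   of a fixed point x, at a point of maximal rank the walk enters and leaves
   by h going downwards; since there is only one downward point per rank,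
   the letter gi used there fixes that point.  Hence x lies in one of finitely
   many finite sets, so the word has finitely many fixed points. *)

From Stdlib Require Import List Arith Lia Classical ClassicalEpsilon Cantor.
Import ListNotations.

Lemma bounded_preimage (f T : nat -> nat) (HT : forall x, T (f x) = x) (M : nat) :
  exists N, forall x, f x < M -> x < N.
Proof.
  induction M as [|M [N HN]].
  - exists 0; intros; lia.
  - exists (max N (S (T M))). intros x Hx.
    destruct (Nat.eq_dec (f x) M) as [E|E].
    + rewrite <- (HT x), E. lia.
    + specialize (HN x ltac:(lia)). lia.
Qed.

Lemma bounded_union (P : nat -> nat -> Prop) (n : nat) :
  (forall k, k < n -> exists N, forall x, P k x -> x < N) ->
  exists N, forall x, (exists k, k < n /\ P k x) -> x < N.
Proof.
  induction n as [|n IH]; intros H.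
  - exists 0. intros x [k [Hk _]]; lia.
  - destruct IH as [N HN]; [intros k Hk; apply H; lia|].
    destruct (H n ltac:(lia)) as [M HM].
    exists (max N M). intros x [k [Hk Hx]].
    destruct (Nat.eq_dec k n) as [->|Hkn].
    + specialize (HM x Hx); lia.
    + assert (x < N) by (apply HN; exists k; split; [lia|exact Hx]). lia.
Qed.

Lemma argmax_below (r : nat -> nat) (n : nat) :
  0 < n -> exists k, k < n /\ forall j, j < n -> r j <= r k.
Proof.
  induction n as [|n IH]; intros Hn; [lia|].
  destruct (Nat.eq_dec n 0) as [->|Hn0].
  - exists 0. split; [lia|]. intros j Hj. replace j with 0 by lia. lia.
  - destruct (IH ltac:(lia)) as [k [Hk Hmax]].
    destruct (le_lt_dec (r n) (r k)).
    + exists k. split; [lia|]. intros j Hj.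
      destruct (Nat.eq_dec j n) as [->|]; [lia|apply Hmax; lia].
    + exists n. split; [lia|]. intros j Hj.
      destruct (Nat.eq_dec j n) as [->|]; [lia|]. specialize (Hmax j ltac:(lia)). lia.
Qed.

Lemma cofinitary_ext (f f' : nat -> nat) :
  (forall n, f n = f' n) -> cofinitary f -> cofinitary f'.
Proof.
  intros E [Hid|[N HN]]; [left|right].
  - intros n. rewrite <- E. apply Hid.
  - exists N. intros n Hn. apply HN. rewrite E. exact Hn.
Qed.

Lemma cofinitary_conj (a b F : nat -> nat)
  (Hba : forall x, b (a x) = x) (Hab : forall x, a (b x) = x) :
  cofinitary F -> cofinitary (fun x => b (F (a x))).
Proof.
  intros [Hid|[N HN]]; [left|right].
  - intros x. rewrite Hid. apply Hba.
  - destruct (bounded_preimage a b Hba N) as [M HM]. exists M.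
    intros x Hx. apply HM, HN.
    apply (f_equal a) in Hx. rewrite Hab in Hx. exact Hx.
Qed.
(* An involution h that changes a G-invariant rank and, inside each rank,
   descends from at most one point.  Such an h can be added to G. *)
Record shifting_involution (G : (nat -> nat) -> Prop) (h rank : nat -> nat) : Prop := {
  h_involutive : forall x, h (h x) = x;
  rank_invariant : forall g x, G g -> rank (g x) = rank x;
  h_moves_rank : forall x, rank (h x) <> rank x;
  h_descends_once : forall x y, rank x = rank y ->
    rank (h x) < rank x -> rank (h y) < rank y -> x = y }.

Section Extension.

Variables (G : (nat -> nat) -> Prop) (h rank : nat -> nat).
Hypothesis HG : cofinitary_group G.
Hypothesis Hh : shifting_involution G h rank.

Let Hinv : forall x, h (h x) = x := h_involutive G h rank Hh.
Let Hrank : forall g x, G g -> rank (g x) = rank x := rank_invariant G h rank Hh.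
Let Hmoves : forall x, rank (h x) <> rank x := h_moves_rank G h rank Hh.

Fixpoint hword (ps : list (nat -> nat)) (x : nat) : nat :=
  match ps with
  | [] => x
  | g :: ps => h (g (hword ps x))
  end.

Lemma hword_app (l1 l2 : list (nat -> nat)) (x : nat) :
  hword (l1 ++ l2) x = hword l1 (hword l2 x).
Proof. induction l1 as [|g l1 IH]; simpl; congruence. Qed.

Lemma hword_skipn (ps : list (nat -> nat)) (j x : nat) : j < length ps ->
  hword (skipn j ps) x = h (nth j ps (fun y => y) (hword (skipn (S j) ps) x)).
Proof.
  revert j. induction ps as [|g ps IH]; intros j Hj; simpl in Hj; [lia|].
  destruct j as [|j]; [reflexivity|]. apply IH. lia.
Qed.

Lemma hword_bij (ps : list (nat -> nat)) : Forall G ps -> is_bij (hword ps).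
Proof.
  induction 1 as [|g ps Hg _ [T [HT1 HT2]]].
  - exists (fun x => x). split; reflexivity.
  - destruct (proj1 (proj1 HG) g Hg) as [g' [Hg1 Hg2]].
    exists (fun z => T (g' (h z))). split; intros x; simpl.
    + now rewrite Hinv, Hg1.
    + now rewrite HT2, Hg2.
Qed.

(* The heart of the argument: a closed walk w 0 -> ... -> w n = w 0 whose
   steps are y |-> h (a j y) with a j in G must use some a k at a fixed
   point, namely at a point of maximal rank. *)
Lemma cyclic_walk_fixes (w : nat -> nat) (a : nat -> nat -> nat) (n : nat) :
  0 < n -> w 0 = w n -> (forall j, j < n -> G (a j)) ->
  (forall j, j < n -> w j = h (a j (w (S j)))) ->
  exists k, k < n /\ a k (w (S k)) = w (S k).
Proof.
  intros Hn Hcyc HGa Hstep.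
  destruct (argmax_below (fun j => rank (w (S j))) n Hn) as [k [Hk Hmax]].
  set (top := w (S k)).
  assert (Hbound : forall j, j <= n -> rank (w j) <= rank top).
  { intros [|j] Hj; [rewrite Hcyc; replace n with (S (n - 1)) by lia|]; apply Hmax; lia. }
  assert (Htop : exists j, j < n /\ w j = top).
  { destruct (Nat.eq_dec (S k) n) as [E|E].
    - exists 0. split; [lia|]. unfold top. now rewrite E.
    - exists (S k). split; [lia|reflexivity]. }
  assert (Hexit : rank (h (a k top)) < rank (a k top)).
  { assert (E : h (a k top) = w k) by (symmetry; apply Hstep, Hk).
    pose proof (Hmoves (a k top)) as Hne.
    rewrite E, (Hrank (a k) top) in * by (apply HGa, Hk).
    pose proof (Hbound k ltac:(lia)). lia. }
  assert (Hentry : rank (h top) < rank top).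
  { destruct Htop as [j [Hj Ej]].
    assert (E : h top = a j (w (S j))) by (rewrite <- Ej, (Hstep j Hj); apply Hinv).
    pose proof (Hmoves top) as Hne.
    rewrite E, (Hrank (a j)) in * by (apply HGa, Hj).
    pose proof (Hbound (S j) ltac:(lia)). lia. }
  exists k. split; [exact Hk|].
  apply (h_descends_once G h rank Hh); [|exact Hexit|exact Hentry].
  apply Hrank, HGa, Hk.
Qed.

Definition nontrivial (g : nat -> nat) : Prop := ~ (forall m, g m = m).

(* Words all of whose G-letters are non-trivial are cofinitary: a fixed
   point x is sent by some suffix of the word to a fixed point of a letter. *)
Lemma hword_nontrivial_cofinitary (ps : list (nat -> nat)) :
  ps <> [] -> Forall G ps -> Forall nontrivial ps -> cofinitary (hword ps).
Proof.
  intros Hne HGps Hnt. right.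
  set (n := length ps). set (a := fun j => nth j ps (fun y => y)).
  assert (HGa : forall j, j < n -> G (a j)) by (intros j Hj; apply (proj1 (Forall_nth _ _) HGps), Hj).
  destruct (bounded_union (fun k x => a k (hword (skipn (S k) ps) x) = hword (skipn (S k) ps) x) n)
    as [N HN].
  { intros k Hk.
    destruct (proj2 HG (a k) (HGa k Hk)) as [Hid|[M HM]].
    { exfalso. exact (proj1 (Forall_nth _ _) Hnt k (fun y => y) Hk Hid). }
    assert (HGskip : Forall G (skipn (S k) ps)).
    { rewrite <- (firstn_skipn (S k) ps) in HGps. apply Forall_app in HGps. apply HGps. }
    destruct (hword_bij _ HGskip) as [T [HT _]].
    destruct (bounded_preimage _ T HT M) as [N HN].
    exists N. intros x Hx. apply HN, HM, Hx. }
  exists N. intros x Hx. apply HN.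
  apply (cyclic_walk_fixes (fun j => hword (skipn j ps) x) a n).
  - unfold n. destruct ps; [congruence|simpl; lia].
  - simpl. rewrite Hx. unfold n. now rewrite skipn_all.
  - exact HGa.
  - intros j Hj. apply hword_skipn, Hj.
Qed.

(* Cyclic rotation of a word is a conjugation. *)
Lemma hword_rotate (l1 l2 : list (nat -> nat)) :
  Forall G l1 -> cofinitary (hword (l2 ++ l1)) -> cofinitary (hword (l1 ++ l2)).
Proof.
  intros Hl1 Hc. destruct (hword_bij l1 Hl1) as [T [HT1 HT2]].
  apply (cofinitary_ext (fun x => hword l1 (hword (l2 ++ l1) (T x)))).
  - intros x. now rewrite !hword_app, HT2.
  - apply cofinitary_conj; assumption.
Qed.

(* Every g0 o hword ps is cofinitary, by induction on the length of ps:
   conjugate g0 onto the last letter, then either all letters are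
   non-trivial, or a trivial letter can be rotated to the front, where it
   cancels two occurrences of h. *)
Lemma hword_cofinitary (ps : list (nat -> nat)) :
  Forall G ps -> forall g0, G g0 -> cofinitary (fun x => g0 (hword ps x)).
Proof.
  induction ps as [ps IH] using (induction_ltof1 _ (@length _)).
  intros Hps g0 Hg0. pose proof HG as [[_ [_ [Hcomp Hinvs]]] Hcof].
  destruct ps as [|p0 ps0]; [exact (Hcof g0 Hg0)|].
  destruct (exists_last (l := p0 :: ps0) ltac:(discriminate)) as [l [q Eps]].
  rewrite Eps in *. clear p0 ps0 Eps.
  apply Forall_app in Hps as [Hl Hq]. inversion Hq as [|? ? HGq _]; subst.
  set (ps' := l ++ [fun y => q (g0 y)]).
  assert (HGps' : Forall G ps') by (apply Forall_app; split; [exact Hl|constructor; auto]).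
  assert (Hlen : length ps' = length (l ++ [q])) by (unfold ps'; now rewrite !length_app).
  enough (Hc : cofinitary (hword ps')).
  { destruct (Hinvs g0 Hg0) as [g0' [_ [Hg0' Hg0'']]].
    apply (cofinitary_ext (fun x => g0 (hword ps' (g0' x)))).
    - intros x. unfold ps'. rewrite !hword_app. simpl. now rewrite Hg0''.
    - apply cofinitary_conj; assumption. }
  destruct (classic (Forall nontrivial ps')) as [Hnt|Htriv].
  { apply hword_nontrivial_cofinitary; auto. unfold ps'. destruct l; discriminate. }
  rewrite Forall_forall in Htriv. apply not_all_ex_not in Htriv as [p Hp].
  apply imply_to_and in Hp as [Hin Hpid]. apply NNPP in Hpid.
  apply in_split in Hin as [l1 [l2 Esplit]]. rewrite Esplit in HGps', Hlen.
  apply Forall_app in HGps' as [Hl1 Hpl2]. inversion Hpl2 as [|? ? _ Hl2]; subst.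
  rewrite Esplit. apply (hword_rotate l1 (p :: l2) Hl1). simpl.
  assert (Hrest : Forall G (l2 ++ l1)) by (apply Forall_app; auto).
  destruct (l2 ++ l1) as [|c r] eqn:Er.
  - right. exists 0. intros x Hx. simpl in Hx. rewrite Hpid in Hx.
    exfalso. apply (Hmoves x). now rewrite Hx.
  - inversion Hrest as [|? ? Hc Hr]; subst.
    apply (cofinitary_ext (fun x => c (hword r x))).
    + intros x. simpl. now rewrite Hpid, Hinv.
    + apply IH; auto. unfold ltof.
      assert (Hr' : length (l2 ++ l1) = length (c :: r)) by now rewrite Er.
      rewrite !length_app in *. simpl in *. lia.
Qed.

Inductive generated : (nat -> nat) -> Prop :=
  | generated_id : generated (fun x => x)
  | generated_G g f : G g -> generated f -> generated (fun x => g (f x))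
  | generated_h f : generated f -> generated (fun x => h (f x)).

Lemma generated_comp (f k : nat -> nat) :
  generated f -> generated k -> generated (fun x => f (k x)).
Proof.
  intros Hf Hk. induction Hf as [|g f Hg _ IH|f _ IH].
  - exact Hk.
  - exact (generated_G g _ Hg IH).
  - exact (generated_h _ IH).
Qed.

Lemma generated_inverse (f : nat -> nat) : generated f ->
  exists f', generated f' /\ (forall x, f' (f x) = x) /\ (forall x, f (f' x) = x).
Proof.
  induction 1 as [|g f Hg _ [f' [Hf' [E1 E2]]]|f _ [f' [Hf' [E1 E2]]]].
  - exists (fun x => x). repeat split; constructor.
  - destruct (proj2 (proj2 (proj2 (proj1 HG))) g Hg) as [g' [Hg' [F1 F2]]].
    exists (fun x => f' (g' x)). repeat split.
    + exact (generated_comp _ _ Hf' (generated_G g' _ Hg' generated_id)).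
    + intros x. now rewrite F1, E1.
    + intros x. now rewrite E2, F2.
  - exists (fun x => f' (h x)). repeat split.
    + exact (generated_comp _ _ Hf' (generated_h _ generated_id)).
    + intros x. now rewrite Hinv, E1.
    + intros x. now rewrite E2, Hinv.
Qed.

Lemma generated_normal_form (f : nat -> nat) : generated f ->
  exists g0 ps, G g0 /\ Forall G ps /\ forall x, f x = g0 (hword ps x).
Proof.
  pose proof HG as [[_ [Hid [Hcomp _]]] _].
  induction 1 as [|g f Hg _ [g0 [ps [Hg0 [Hps E]]]]|f _ [g0 [ps [Hg0 [Hps E]]]]].
  - exists (fun x => x), []. repeat split; auto.
  - exists (fun x => g (g0 x)), ps. split; [auto|split; [exact Hps|]].
    intros x. now rewrite E.
  - exists (fun x => x), (g0 :: ps). repeat split; auto. intros x. simpl. now rewrite E.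
Qed.

Lemma generated_cofinitary_group : cofinitary_group generated.
Proof.
  split; [split; [|split; [|split]]|].
  - intros f Hf. destruct (generated_inverse f Hf) as [f' [_ [E1 E2]]].
    exists f'. split; assumption.
  - exact generated_id.
  - exact generated_comp.
  - exact generated_inverse.
  - intros f Hf. destruct (generated_normal_form f Hf) as [g0 [ps [Hg0 [Hps E]]]].
    apply (cofinitary_ext (fun x => g0 (hword ps x))); [intros x; now rewrite E|].
    exact (hword_cofinitary ps Hps g0 Hg0).
Qed.

End Extension.

(* A maximal cofinitary group admits no shifting involution, since the
   involution would lie in G while changing a G-invariant rank. *)
Lemma no_shifting_involution (G : (nat -> nat) -> Prop) (h rank : nat -> nat) :
  maximal_cofinitary_group G -> ~ shifting_involution G h rank.
Proof.
  intros [HG Hmax] Hh.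
  assert (HGh : G h).
  { apply (Hmax (generated G h) (generated_cofinitary_group G h rank HG Hh)).
    - intros g Hg. exact (generated_G G h g _ Hg (generated_id G h)).
    - exact (generated_h G h _ (generated_id G h)). }
  apply (h_moves_rank G h rank Hh 0), (rank_invariant G h rank Hh), HGh.
Qed.
Definition infinite_set (P : nat -> Prop) : Prop := forall N, exists x, N <= x /\ P x.

(* count_below P n = number of y < n with P y; it enumerates an infinite
   set P in increasing order. *)
Fixpoint count_below (P : nat -> Prop) (n : nat) : nat :=
  match n with
  | 0 => 0
  | S n => count_below P n + (if excluded_middle_informative (P n) then 1 else 0)
  end.

Lemma count_below_le (P : nat -> Prop) (n : nat) : count_below P n <= n.
Proof. induction n; simpl; [lia|]. destruct excluded_middle_informative; lia. Qed.

Lemma count_below_mono (P : nat -> Prop) (m n : nat) :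
  m <= n -> count_below P m <= count_below P n.
Proof. induction 1; simpl; [|destruct excluded_middle_informative]; lia. Qed.

Lemma count_below_inj (P : nat -> Prop) (x y : nat) :
  P x -> P y -> count_below P x = count_below P y -> x = y.
Proof.
  assert (Hlt : forall u v, P u -> u < v -> count_below P u < count_below P v).
  { intros u v Hu Huv. pose proof (count_below_mono P (S u) v Huv) as Hm. simpl in Hm.
    destruct excluded_middle_informative; [lia|contradiction]. }
  intros Hx Hy E. destruct (Nat.lt_trichotomy x y) as [L|[Exy|L]]; auto.
  - specialize (Hlt x y Hx L). lia.
  - specialize (Hlt y x Hy L). lia.
Qed.

Lemma count_below_surj (P : nat -> Prop) :
  infinite_set P -> forall k, exists x, P x /\ count_below P x = k.
Proof.
  intros Hinf k.
  assert (Hhit : forall m, k < count_below P m -> exists x, P x /\ count_below P x = k).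
  { induction m as [|m IH]; simpl; intros Hk; [lia|].
    destruct (Nat.lt_ge_cases k (count_below P m)) as [L|L]; [exact (IH L)|].
    destruct excluded_middle_informative as [Pm|]; [|lia].
    exists m. split; [exact Pm|lia]. }
  assert (Hunbounded : forall j, exists m, j <= count_below P m).
  { induction j as [|j [m Hm]]; [exists 0; lia|].
    destruct (Hinf m) as [x [Hx Px]]. exists (S x). simpl.
    destruct excluded_middle_informative; [|contradiction].
    pose proof (count_below_mono P m x Hx). lia. }
  destruct (Hunbounded (S k)) as [m Hm]. apply (Hhit m). lia.
Qed.

Lemma exists_least (P : nat -> Prop) :
  (exists n, P n) -> exists n, P n /\ forall y, y < n -> ~ P y.
Proof.
  intros [n Hn]. induction n as [n IH] using lt_wf_ind.
  destruct (classic (exists y, y < n /\ P y)) as [[y [Hy Py]]|Hno].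
  - exact (IH y Hy Py).
  - exists n. split; [exact Hn|]. intros y Hy Py. apply Hno. eauto.
Qed.

Section Orbits.

Variable G : (nat -> nat) -> Prop.
Hypothesis HG : is_subgroup_Sym G.

Lemma orbit_refl (x : nat) : same_orbit G x x.
Proof. exists (fun n => n). split; [apply HG|reflexivity]. Qed.

Lemma orbit_sym (x y : nat) : same_orbit G x y -> same_orbit G y x.
Proof.
  intros [g [Hg <-]]. destruct (proj2 (proj2 (proj2 HG)) g Hg) as [g' [Hg' [E _]]].
  exists g'. split; [exact Hg'|apply E].
Qed.

Lemma orbit_trans (x y z : nat) :
  same_orbit G x y -> same_orbit G y z -> same_orbit G x z.
Proof.
  intros [g [Hg <-]] [g' [Hg' <-]].
  exists (fun n => g' (g n)). split; [apply HG; assumption|reflexivity].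
Qed.

Definition orbit_rep (r : nat) : Prop := forall y, y < r -> ~ same_orbit G y r.

Lemma orbit_rep_unique (r r' : nat) :
  orbit_rep r -> orbit_rep r' -> same_orbit G r r' -> r = r'.
Proof.
  intros Hr Hr' Hrr'. destruct (Nat.lt_trichotomy r r') as [L|[E|L]]; auto; exfalso.
  - exact (Hr' r L Hrr').
  - exact (Hr r' L (orbit_sym r r' Hrr')).
Qed.

Lemma orbit_has_rep (x : nat) : exists r, orbit_rep r /\ same_orbit G r x.
Proof.
  destruct (exists_least (fun r => same_orbit G r x)) as [r [Hrx Hleast]].
  - exists x. apply orbit_refl.
  - exists r. split; [|exact Hrx].
    intros y Hy Hyr. exact (Hleast y Hy (orbit_trans y r x Hyr Hrx)).
Qed.

Lemma orbit_reps_infinite : ~ finitely_many_orbits G -> infinite_set orbit_rep.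
Proof.
  intros Hno N. apply NNPP. intros Hbounded. apply Hno.
  exists (seq 0 N). intros n. destruct (orbit_has_rep n) as [r [Hr Hrn]].
  exists r. split; [|exact Hrn]. apply in_seq.
  destruct (Nat.lt_ge_cases r N); [lia|]. exfalso. apply Hbounded. eauto.
Qed.

(* A G-invariant colouring with infinitely many points of each colour:
   colour the k-th orbit by the first Cantor coordinate of k. *)
Lemma orbit_coloring : ~ finitely_many_orbits G ->
  exists c : nat -> nat, (forall g x, G g -> c (g x) = c x) /\
                         (forall k, infinite_set (fun x => c x = k)).
Proof.
  intros Hno.
  pose (o := fun x => proj1_sig (constructive_indefinite_description _ (orbit_has_rep x))).
  assert (Ho : forall x, orbit_rep (o x) /\ same_orbit G (o x) x)
    by (intros x; exact (proj2_sig (constructive_indefinite_description _ (orbit_has_rep x)))).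
  assert (Ho_orbit : forall x y, same_orbit G x y -> o x = o y).
  { intros x y Hxy. apply orbit_rep_unique; [apply Ho|apply Ho|].
    apply (orbit_trans _ x); [apply Ho|].
    apply (orbit_trans _ y); [exact Hxy|apply orbit_sym, Ho]. }
  exists (fun x => fst (of_nat (count_below orbit_rep (o x)))). split.
  - intros g x Hg. rewrite (Ho_orbit (g x) x); [reflexivity|].
    apply orbit_sym. exists g. split; auto.
  - intros k N.
    destruct (count_below_surj _ (orbit_reps_infinite Hno) (to_nat (k, N))) as [r [Hr Er]].
    exists r. split.
    + pose proof (count_below_le orbit_rep r). pose proof (to_nat_non_decreasing k N). lia.
    + assert (Eo : o r = r) by (apply orbit_rep_unique; [apply Ho|exact Hr|apply Ho]).
      simpl. now rewrite Eo, Er, cancel_of_to.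
Qed.

End Orbits.
Lemma fiber_enumeration (c : nat -> nat) :
  (forall k, infinite_set (fun x => c x = k)) ->
  exists (e : nat -> nat * nat) (d : nat * nat -> nat),
    (forall x, d (e x) = x) /\ (forall p, e (d p) = p) /\ (forall x, fst (e x) = c x).
Proof.
  intros Hinf.
  set (e := fun x => (c x, count_below (fun y => c y = c x) x)).
  assert (He_surj : forall p, exists x, e x = p).
  { intros [k i]. destruct (count_below_surj _ (Hinf k) i) as [x [Cx Ix]].
    exists x. unfold e. now rewrite Cx, Ix. }
  pose (d := fun p => proj1_sig (constructive_indefinite_description _ (He_surj p))).
  assert (Hed : forall p, e (d p) = p)
    by (intros p; exact (proj2_sig (constructive_indefinite_description _ (He_surj p)))).
  exists e, d. split; [|split; [exact Hed|reflexivity]].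
  intros x. pose proof (Hed (e x)) as E. unfold e in E at 1 2. injection E as Ec Ei.
  rewrite Ec in Ei. apply (count_below_inj (fun y => c y = c x)); auto.
Qed.

Arguments to_nat : simpl never.
Arguments of_nat : simpl never.

(* A shifting involution of N x N (ranks are first coordinates): it pairs
   (k, i+1) with a fresh row head (2 + <k,i>, 0), and (0,0) with (1,0).
   Row k descends only from its head (k, 0). *)
Definition pair_swap (p : nat * nat) : nat * nat :=
  match p with
  | (k, S i) => (S (S (to_nat (k, i))), 0)
  | (0, 0) => (1, 0)
  | (1, 0) => (0, 0)
  | (S (S k), 0) => (fst (of_nat k), S (snd (of_nat k)))
  end.

Lemma pair_swap_succ (k i : nat) : pair_swap (k, S i) = (S (S (to_nat (k, i))), 0).
Proof. destruct k as [|[|]]; reflexivity. Qed.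

Lemma pair_swap_head (k : nat) : pair_swap (S (S k), 0) = (fst (of_nat k), S (snd (of_nat k))).
Proof. reflexivity. Qed.

Lemma pair_swap_involutive (p : nat * nat) : pair_swap (pair_swap p) = p.
Proof.
  destruct p as [k [|i]].
  - destruct k as [|[|k]]; [reflexivity|reflexivity|].
    rewrite pair_swap_head, pair_swap_succ, <- surjective_pairing, cancel_to_of. reflexivity.
  - rewrite pair_swap_succ, pair_swap_head, cancel_of_to. reflexivity.
Qed.

Lemma pair_swap_moves_row (p : nat * nat) : fst (pair_swap p) <> fst p.
Proof.
  destruct p as [k [|i]].
  - destruct k as [|[|k]]; [discriminate|discriminate|].
    rewrite pair_swap_head. simpl fst.
    pose proof (to_nat_non_decreasing (fst (of_nat k)) (snd (of_nat k))) as H.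
    rewrite <- surjective_pairing, cancel_to_of in H. lia.
  - rewrite pair_swap_succ. simpl fst. pose proof (to_nat_non_decreasing k i). lia.
Qed.

Lemma pair_swap_descends (p : nat * nat) : fst (pair_swap p) < fst p -> snd p = 0.
Proof.
  destruct p as [k [|i]]; [reflexivity|].
  rewrite pair_swap_succ. simpl fst. pose proof (to_nat_non_decreasing k i). lia.
Qed.

Lemma shifting_involution_exists (G : (nat -> nat) -> Prop) :
  is_subgroup_Sym G -> ~ finitely_many_orbits G -> exists h rank, shifting_involution G h rank.
Proof.
  intros HG Hno.
  destruct (orbit_coloring G HG Hno) as [c [Hc_inv Hc_inf]].
  destruct (fiber_enumeration c Hc_inf) as [e [d [Hde [Hed He]]]].
  exists (fun x => d (pair_swap (e x))), c.
  assert (Hrank : forall x, c (d (pair_swap (e x))) = fst (pair_swap (e x)))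
    by (intros x; now rewrite <- He, Hed).
  constructor.
  - intros x. now rewrite Hed, pair_swap_involutive.
  - exact Hc_inv.
  - intros x. rewrite Hrank, <- He. apply pair_swap_moves_row.
  - intros x y Exy Dx Dy. rewrite Hrank, <- He in Dx, Dy.
    rewrite <- (Hde x), <- (Hde y). f_equal.
    rewrite (surjective_pairing (e x)), (surjective_pairing (e y)), !He, Exy.
    now rewrite (pair_swap_descends _ Dx), (pair_swap_descends _ Dy).
Qed.

Theorem mainTheorem9 (G : (nat -> nat) -> Prop) :
  maximal_cofinitary_group G -> finitely_many_orbits G.
Proof.
  intros Hmax. apply NNPP. intros Hno.
  destruct (shifting_involution_exists G (proj1 (proj1 Hmax)) Hno) as [h [rank Hh]].
  exact (no_shifting_involution G h rank Hmax Hh).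
Qed.
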